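(* Let $\mathcal F\subseteq\mathcal O(A)$ be a conservative clone with $\mathrm r(\mathcal F)=r\ge3$. Let $n$ be a natural number, $\mathbf a\in A^n_{<r}$, $f\in\mathcal F_{[n]}$, and $\sigma\colon A\to A$ an arbitrary function. Then $f(\sigma(\mathbf a))=\sigma(f(\mathbf a))$, where $\sigma(\mathbf a)$ is applied componentwise.
   Context: $\mathcal O(A)=\bigcup_{n<\omega}A^{A^n}$; $\mathcal F_{[n]}=\mathcal F\cap A^{A^n}$. $\mathrm{ran}\,\mathbf a$ is the set of entries of $\mathbf a\in A^n$; $A^n_{<r}=\{\mathbf a\in A^n:|\mathrm{ran}\,\mathbf a|<r\}$. A clone with carrier $A$ is a subset of $\mathcal O(A)$ containing all projections and closed under composition; it is conservative if $f(\mathbf a)\in\mathrm{ran}\,\mathbf a$ for all its members $f$ and all $\mathbf a$. $\mathrm r(\mathcal F)$ is the least $r$ such that $\mathcal F$ contains an $r$-ary function that is not a projection ($\omega$ if there is none). *)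

From mathcomp Require Import all_boot.
From Stdlib Require List.
Set Implicit Arguments. Unset Strict Implicit. Unset Printing Implicit Defensive.

Definition op (A : Type) (n : nat) := ('I_n -> A) -> A.

(* A set of operations F ⊆ O(A), given by its n-ary parts F_[n]. *)
Definition opset (A : Type) := forall n : nat, op A n -> Prop.

Definition proj (A : Type) (n : nat) (i : 'I_n) : op A n := fun x => x i.

Definition is_projection (A : Type) (n : nat) (f : op A n) : Prop :=
  exists i : 'I_n, forall x : 'I_n -> A, f x = x i.

Definition is_clone (A : Type) (F : opset A) : Prop :=
  (forall n (i : 'I_n), F n (@proj A n i)) /\
  (forall n m (f : op A n) (g : 'I_n -> op A m),
      F n f -> (forall i, F m (g i)) ->
      F m (fun x => f (fun i => g i x))).

Definition in_ran (A : Type) (n : nat) (a : 'I_n -> A) (y : A) : Prop :=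
  exists i : 'I_n, a i = y.

Definition conservative (A : Type) (F : opset A) : Prop :=
  forall n (f : op A n), F n f -> forall a : 'I_n -> A, in_ran a (f a).

Definition rank_eq (A : Type) (F : opset A) (r : nat) : Prop :=
  (exists f : op A r, F r f /\ ~ is_projection f) /\
  (forall m (f : op A m), m < r -> F m f -> is_projection f).

Definition ran_lt (A : Type) (n : nat) (a : 'I_n -> A) (r : nat) : Prop :=
  exists s : seq A, size s < r /\ forall i : 'I_n, List.In (a i) s.

(* Since |ran a| < r, the tuple a factors as a = b ∘ idx through a tuple b of
   arity m < r. Then x ↦ f (x ∘ idx) is an m-ary member of the clone, hence a
   projection, and projections commute with every map σ applied componentwise. *)
From mathcomp Require Import all_boot.
From Stdlib Require Import FunctionalExtensionality ClassicalEpsilon.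
From Stdlib Require List.

Set Implicit Arguments.
Unset Strict Implicit.
Unset Printing Implicit Defensive.

Lemma In_tnth (A : Type) (x : A) (s : seq A) :
  List.In x s -> exists j : 'I_(size s), tnth (in_tuple s) j = x.
Proof.
elim: s => [|y s IH] //= [<-|/IH [j <-]]; first by exists ord0.
by exists (lift ord0 j); rewrite !(tnth_nth x).
Qed.

Lemma ran_factor (A : Type) (n : nat) (a : 'I_n -> A) (s : seq A) :
  (forall i, List.In (a i) s) ->
  exists idx : 'I_n -> 'I_(size s), a = (fun i => tnth (in_tuple s) (idx i)).
Proof.
move=> a_in_s.
pose idxP i := constructive_indefinite_description _ (In_tnth (a_in_s i)).
exists (fun i => proj1_sig (idxP i)).
by apply: functional_extensionality => i; rewrite (proj2_sig (idxP i)).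
Qed.

Lemma clone_minor (A : Type) (F : opset A) (n m : nat) (f : op A n)
    (idx : 'I_n -> 'I_m) :
  is_clone F -> F n f -> F m (fun x => f (fun i => x (idx i))).
Proof.
by move=> [Fproj Fcomp] Ff; apply: (Fcomp _ _ _ (fun i => @proj A m (idx i))).
Qed.

Lemma projection_commutes (A : Type) (m : nat) (g : op A m) (sigma : A -> A)
    (b : 'I_m -> A) :
  is_projection g -> g (fun j => sigma (b j)) = sigma (g b).
Proof. by move=> [j gj]; rewrite !gj. Qed.

Theorem claim1 (A : Type) (F : opset A) (r : nat)
  (HF : is_clone F) (Hcons : conservative F)
  (Hr : rank_eq F r) (Hr3 : 3 <= r)
  (n : nat) (a : 'I_n -> A) (Ha : ran_lt a r)
  (f : op A n) (Hf : F n f) (sigma : A -> A) :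
  f (fun i => sigma (a i)) = sigma (f a).
Proof.
have [s [size_s_lt a_in_s]] := Ha.
have [idx ->] := ran_factor a_in_s.
pose g := fun x : 'I_(size s) -> A => f (fun i => x (idx i)).
have g_proj : is_projection g.
  exact: Hr.2 _ g size_s_lt (clone_minor idx HF Hf).
exact: (projection_commutes sigma (tnth (in_tuple s)) g_proj).
Qed.
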